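(* Let $F,G$ be two plane forests with $n$ vertices. Then $F\leq G$ if and only if $G$ is obtained from $F$ by a finite number of transformations, where a transformation of a plane forest at a vertex $s$ which is not a leaf is the following operation: let $c$ be the rightmost child of $s$; remove the edge from $s$ to $c$ (so that $c$ keeps its own subtree); if $s$ has a parent $p$, make $c$ a child of $p$ placed immediately to the right of $s$ among the children of $p$; if $s$ is a root, make $c$ a root placed immediately to the right of the tree of $s$. All other parts of the forest are unchanged.
   Context: A plane poset is a finite set with two partial orders $\leq_h,\leq_r$ such that two distinct elements are $\leq_h$-comparable iff they are not $\leq_r$-comparable, considered up to isomorphism. A plane forest is a plane poset which does not contain, as a plane subposet (subset with restricted orders), the plane poset $\{a,b,c\}$ with $a<_r b$, $a<_h c$, $b<_h c$. Equivalently, a plane forest is a finite rooted forest (roots at the bottom) in which the roots are linearly ordered from left to right and the children of each vertex are linearly ordered from left to right; $x\leq_h y$ iff $x$ is an ancestor of $y$ (or $x=y$), and for $\leq_h$-incomparable $x,y$, $x<_r y$ iff $x$ lies to the left of $y$. On a plane poset, $x\leq y$ iff ($x\leq_h y$ or $x\leq_r y$) is a total order (known fact). For plane posets $P,Q$ of the same cardinality, $\theta_{P,Q}$ is the increasing bijection $P\to Q$ for these total orders, and $P\leq Q$ means: for all $x,y\in P$, $\theta_{P,Q}(x)\leq_h\theta_{P,Q}(y)$ in $Q$ implies $x\leq_h y$ in $P$. *)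

From mathcomp Require Import all_boot.
From Stdlib Require Export Relations.Relation_Operators.
Set Implicit Arguments. Unset Strict Implicit. Unset Printing Implicit Defensive.

(* A plane tree: a root with a left-to-right ordered list of subtrees.
   A plane forest: a left-to-right ordered list of plane trees. *)
Inductive ptree := PNode of seq ptree.
Definition pforest := seq ptree.

Definition children (t : ptree) : pforest := let: PNode cs := t in cs.

(* Vertices are addressed by their path of child indices: the address
   [:: i0; i1; ...; ik] is the vertex reached from the i0-th root by taking
   the i1-th child, ..., the ik-th child (indices from 0, left to right).
   tverts t lists the addresses of the vertices of t relative to its root
   (the root is [::]). *)
Fixpoint tverts (t : ptree) : seq (seq nat) :=
  let: PNode cs := t in
  [::] :: (fix aux (k : nat) (f : seq ptree) : seq (seq nat) :=
             match f with
             | [::] => [::]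
             | c :: f' => map (cons k) (tverts c) ++ aux k.+1 f'
             end) 0 cs.

Fixpoint fverts_from (k : nat) (f : pforest) : seq (seq nat) :=
  match f with
  | [::] => [::]
  | t :: f' => map (cons k) (tverts t) ++ fverts_from k.+1 f'
  end.

Definition fverts (f : pforest) : seq (seq nat) := fverts_from 0 f.

Definition nverts (f : pforest) : nat := size (fverts f).

(* x <=_h y : x is an ancestor of y or x = y. *)
Definition hle (x y : seq nat) : bool := prefix x y.

(* x <_r y : x and y are <=_h-incomparable and x lies to the left of y. *)
Fixpoint rlt (x y : seq nat) : bool :=
  match x, y with
  | i :: x', j :: y' => (i < j) || ((i == j) && rlt x' y')
  | _, _ => false
  end.

Definition rle (x y : seq nat) : bool := (x == y) || rlt x y.

Definition tle (x y : seq nat) : bool := hle x y || rle x y.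
Definition tlt (x y : seq nat) : bool := tle x y && (x != y).

(* Rank of a vertex for the total order: number of vertices strictly below.
   The increasing bijection theta_{F,G} maps the vertex of rank r of F to the
   vertex of rank r of G. *)
Definition rank (f : pforest) (x : seq nat) : nat :=
  count (fun z => tlt z x) (fverts f).

Definition forest_le (F G : pforest) : Prop :=
  forall x y x' y' : seq nat,
    x \in fverts F -> y \in fverts F ->
    x' \in fverts G -> y' \in fverts G ->
    rank G x' = rank F x -> rank G y' = rank F y ->
    hle x' y' -> hle x y.

(* Split the tree t at its rightmost root-child c: returns [:: t'; c] where t'
   is t with the subtree c removed (if t is a leaf, returns [:: t]). *)
Definition split_last (t : ptree) : seq ptree :=
  match rev (children t) with
  | [::] => [:: t]
  | c :: rcs => [:: PNode (rev rcs); c]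
  end.

Fixpoint transf (f : pforest) (s : seq nat) : pforest :=
  match s with
  | [::] => f
  | [:: i] => take i f ++ split_last (nth (PNode [::]) f i) ++ drop i.+1 f
  | i :: s' =>
      take i f ++ [:: PNode (transf (children (nth (PNode [::]) f i)) s')]
               ++ drop i.+1 f
  end.

(* One transformation step at a vertex s of F which is not a leaf. *)
Definition transf_step (F G : pforest) : Prop :=
  exists s : seq nat,
    s \in fverts F /\ rcons s 0 \in fverts F /\ G = transf F s.

From mathcomp Require Import all_boot.
From mathcomp Require Import zify.
From Stdlib Require Import Relations.Relation_Operators.
Set Implicit Arguments. Unset Strict Implicit. Unset Printing Implicit Defensive.

(* A plane forest is encoded by the sequence [sizes F] of the sizes of the
   subtrees of its vertices, listed in preorder.  Preorder is the total order
   [tle], so the [i]-th vertex has rank [i], and its descendants are the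
   vertices of indices [i < j < i + nth 0 (sizes F) i].  Hence [F <= G] means
   that no subtree of [G] is larger than the corresponding subtree of [F].
   A transformation at a vertex lowers the size of its own subtree only, by the
   size of its last child's subtree; this gives one implication, and for the
   converse it makes the total [sumn (sizes F)] drop, which drives an
   induction. *)

Section SeqCat.
Variables (T : Type) (x0 : T).

Lemma nth_cat_addn A B v : nth x0 (A ++ B) (size A + v) = nth x0 B v.
Proof. by rewrite nth_cat ltnNge leq_addr addKn. Qed.

Lemma set_nth_cat_addn A B v y :
  set_nth x0 (A ++ B) (size A + v) y = A ++ set_nth x0 B v y.
Proof. by elim: A => //= a A ->. Qed.

Lemma set_nth_catl A B v y : v < size A ->
  set_nth x0 (A ++ B) v y = set_nth x0 A v y ++ B.
Proof. by elim: A v => //= a A IH [|v] //= ltvA; rewrite IH. Qed.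

End SeqCat.

Lemma exists_nth_ltn (s t : seq nat) : size s = size t ->
  (forall i, nth 0 t i <= nth 0 s i) -> s != t ->
  exists i, (i < size s) && (nth 0 t i < nth 0 s i).
Proof.
move=> eq_size le_ts neq_st.
have /hasP[i]: has (fun i => nth 0 t i < nth 0 s i) (iota 0 (size s)).
  apply: contraNT neq_st => /hasPn no_lt; apply/eqP/(eq_from_nth (x0 := 0)) => // i lti.
  by apply/eqP; rewrite eqn_leq le_ts andbT leqNgt no_lt // mem_iota add0n lti.
by rewrite mem_iota add0n => /andP[_ lti] lt_ti; exists i; rewrite lti.
Qed.

Lemma sumn_set_nth_add s v y : v < size s ->
  sumn (set_nth 0 s v y) + nth 0 s v = sumn s + y.
Proof. by elim: s v => //= a s IH [|v] /= ltvs; [lia | have := IH v ltvs; lia]. Qed.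

Fixpoint tsizes (t : ptree) : seq nat :=
  let: PNode cs := t in
  let l := flatten (map tsizes cs) in (size l).+1 :: l.

Definition sizes (F : pforest) : seq nat := flatten (map tsizes F).

Lemma sizes_cons cs F :
  sizes (PNode cs :: F) = (size (sizes cs)).+1 :: sizes cs ++ sizes F.
Proof. by []. Qed.

Lemma sizes_cat F G : sizes (F ++ G) = sizes F ++ sizes G.
Proof. by rewrite /sizes map_cat flatten_cat. Qed.

Lemma pforest_ind (P : pforest -> Prop) :
  P [::] -> (forall cs F, P cs -> P F -> P (PNode cs :: F)) -> forall F, P F.
Proof.
move=> P0 PS F; suff: forall N F, size (sizes F) < N -> P F by apply; apply: ltnSn.
elim=> [|N IH] [|[cs] F'] // ltFN; apply: PS; apply: IH;
  move: ltFN; rewrite sizes_cons /= size_cat; lia.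
Qed.

Lemma sizes_inj : injective sizes.
Proof.
elim/pforest_ind => [|cs F IHcs IHF] [|[ds] G] //.
rewrite !sizes_cons => -[eq_size]; move/eqP; rewrite eqseq_cat //.
by case/andP=> /eqP/IHcs-> /eqP/IHF->.
Qed.

Lemma nth_sizes_cons cs F i :
  nth 0 (sizes (PNode cs :: F)) i =
  if i == 0 then (size (sizes cs)).+1
  else if i <= size (sizes cs) then nth 0 (sizes cs) i.-1
  else nth 0 (sizes F) (i - (size (sizes cs)).+1).
Proof. by rewrite sizes_cons; case: i => //= i; rewrite nth_cat subSS. Qed.

Lemma nth_sizes_gt0 F i : i < size (sizes F) -> 0 < nth 0 (sizes F) i.
Proof.
elim/pforest_ind: F i => // cs F IHcs IHF [|i] //.
rewrite nth_sizes_cons sizes_cons /= size_cat => ltiF.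
by case: ifP => ?; [apply: IHcs | apply: IHF]; lia.
Qed.

Lemma nth_sizes_bound F i : i < size (sizes F) -> i + nth 0 (sizes F) i <= size (sizes F).
Proof.
elim/pforest_ind: F i => // cs F IHcs IHF [|i].
  by rewrite nth_sizes_cons sizes_cons /= size_cat; lia.
rewrite nth_sizes_cons sizes_cons /= size_cat.
by case: ifP => ? ?; rewrite ?subSS; [have := IHcs i | have := IHF (i - size (sizes cs))]; lia.
Qed.

Lemma tverts_PNode cs : tverts (PNode cs) = [::] :: fverts_from 0 cs.
Proof. by rewrite /=; congr (_ :: _); move: 0; elim: cs. Qed.

Lemma fverts_from_cons k cs F : fverts_from k (PNode cs :: F) =
  [:: k] :: map (cons k) (fverts_from 0 cs) ++ fverts_from k.+1 F.
Proof. by []. Qed.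

Lemma fverts_from_cat k F G :
  fverts_from k (F ++ G) = fverts_from k F ++ fverts_from (k + size F) G.
Proof. by elim: F k => [|t F IH] k /=; rewrite ?addn0 // IH catA addSnnS. Qed.

Lemma size_fverts_from k F : size (fverts_from k F) = size (sizes F).
Proof.
elim/pforest_ind: F k => // cs F IHcs IHF k.
by rewrite fverts_from_cons sizes_cons /= !size_cat size_map IHcs IHF.
Qed.

Lemma mem_fverts_from k F x : x \in fverts_from k F ->
  exists h x', x = h :: x' /\ k <= h < k + size F.
Proof.
elim/pforest_ind: F k x => // cs F _ IHF k x.
rewrite fverts_from_cons inE => /orP[/eqP->|]; first by exists k, [::]; split=> //=; lia.
rewrite mem_cat => /orP[/mapP[y _ ->]|/IHF [h [x' [-> ?]]]].
  by exists k, y; split=> //=; lia.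
by exists h, x'; split=> //=; lia.
Qed.

Lemma fverts_from_neq_nil k F x : x \in fverts_from k F -> x != [::].
Proof. by case/mem_fverts_from=> h [x' [-> _]]. Qed.

Lemma nth_fverts_from_cons k cs F i :
  nth [::] (fverts_from k (PNode cs :: F)) i =
  if i == 0 then [:: k]
  else if i <= size (sizes cs) then k :: nth [::] (fverts_from 0 cs) i.-1
  else nth [::] (fverts_from k.+1 F) (i - (size (sizes cs)).+1).
Proof.
rewrite fverts_from_cons; case: i => //= i; rewrite nth_cat size_map size_fverts_from subSS.
by case: ifP => // ?; rewrite (nth_map [::]) ?size_fverts_from.
Qed.

Lemma tlt_cons2 k a b : tlt (k :: a) (k :: b) = tlt a b.
Proof. by rewrite /tlt /tle /hle /rle prefix_cons /= ltnn eqxx /= eqseq_cons eqxx. Qed.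

Lemma tlt_cons_ltn k h a b : k < h -> tlt (k :: a) (h :: b).
Proof. by move=> ltkh; rewrite /tlt /tle /rle /= ltkh !orbT /= eqseq_cons ltn_eqF. Qed.

Lemma tlt_cons_gtn k h a b : h < k -> tlt (k :: a) (h :: b) = false.
Proof.
move=> ltkh; rewrite /tlt /tle /hle /rle prefix_cons /= eqseq_cons.
by rewrite gtn_eqF // ltnNge ltnW.
Qed.

Lemma tlt0s w : tlt [::] w = (w != [::]).
Proof. by case: w. Qed.

Lemma tlts0 w : tlt w [::] = false.
Proof. by case: w => //= a w; rewrite /tlt /tle /hle /rle. Qed.

Lemma hle_cons2 k a b : hle (k :: a) (k :: b) = hle a b.
Proof. by rewrite /hle prefix_cons eqxx. Qed.

Lemma hle_cons_neq k h a b : k != h -> hle (k :: a) (h :: b) = false.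
Proof. by rewrite /hle prefix_cons => /negbTE->. Qed.

Lemma count_tlt_nth F k i : i < size (sizes F) ->
  count (tlt^~ (nth [::] (fverts_from k F) i)) (fverts_from k F) = i.
Proof.
elim/pforest_ind: F k i => // cs F IHcs IHF k i.
rewrite nth_fverts_from_cons sizes_cons fverts_from_cons /= size_cat count_cat count_map.
have later_tree_gt x y : x \in fverts_from k.+1 F -> tlt x (k :: y) = false.
  by case/mem_fverts_from => h [x' [-> /andP[? _]]]; rewrite tlt_cons_gtn.
move=> ltiF; case: ifP => [/eqP->|i_neq0].
  rewrite tlt_cons2 tlts0 !(eq_in_count (a2 := pred0)) ?count_pred0 // => x.
    by move/later_tree_gt.
  by rewrite /= tlt_cons2 tlts0.
case: ifP => lei_cs.
  have mem_i : nth [::] (fverts_from 0 cs) i.-1 \in fverts_from 0 cs.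
    by rewrite mem_nth // size_fverts_from; lia.
  rewrite tlt_cons2 tlt0s (fverts_from_neq_nil mem_i).
  rewrite (eq_count (a2 := tlt^~ (nth [::] (fverts_from 0 cs) i.-1))) => [|x].
    rewrite IHcs; last lia.
    by rewrite (eq_in_count (a2 := pred0)) ?count_pred0 => [|x /later_tree_gt]; first lia.
  by rewrite /= tlt_cons2.
have mem_i : nth [::] (fverts_from k.+1 F) (i - (size (sizes cs)).+1) \in fverts_from k.+1 F.
  by rewrite mem_nth // size_fverts_from; lia.
case/mem_fverts_from: (mem_i) => h [x' [Ex /andP[? _]]]; rewrite Ex tlt_cons_ltn //.
rewrite (eq_count (a2 := predT)) => [|x]; last by rewrite /= tlt_cons_ltn.
by rewrite count_predT -Ex IHF ?size_fverts_from; lia.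
Qed.

Lemma hle_nth F k i j : i < size (sizes F) -> j < size (sizes F) ->
  hle (nth [::] (fverts_from k F) i) (nth [::] (fverts_from k F) j) =
  (i <= j < i + nth 0 (sizes F) i).
Proof.
elim/pforest_ind: F k i j => // cs F IHcs IHF k i j.
rewrite !nth_fverts_from_cons nth_sizes_cons sizes_cons /= size_cat => ltiF ltjF.
have mem_F l : l < size (sizes F) -> nth [::] (fverts_from k.+1 F) l \in fverts_from k.+1 F.
  by move=> ?; rewrite mem_nth // size_fverts_from.
have hle_F l y : l < size (sizes F) ->
    hle (k :: y) (nth [::] (fverts_from k.+1 F) l) = false /\
    hle (nth [::] (fverts_from k.+1 F) l) (k :: y) = false.
  move/mem_F/mem_fverts_from => [h [x' [-> /andP[? _]]]].
  by rewrite !hle_cons_neq //; lia.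
have [->|i_neq0] := eqVneq i 0; have [->|j_neq0] := eqVneq j 0;
  rewrite ?eqxx ?(negbTE i_neq0) ?(negbTE j_neq0).
- by rewrite /hle prefix_refl.
- case: ifP => lej_cs; first by rewrite hle_cons2 /hle prefix0s; lia.
  by rewrite (hle_F _ [::] _).1; lia.
- case: ifP => lei_cs.
    have lti_cs : i.-1 < size (fverts_from 0 cs) by rewrite size_fverts_from; lia.
    by rewrite hle_cons2 /hle prefixs0 (negbTE (fverts_from_neq_nil (mem_nth _ lti_cs))); lia.
  by rewrite (hle_F _ [::] _).2; lia.
case: ifP => lei_cs; case: ifP => lej_cs.
- by rewrite hle_cons2 IHcs; lia.
- by have := nth_sizes_bound (i := i.-1) (F := cs); rewrite (hle_F _ _ _).1; lia.
- by rewrite (hle_F _ _ _).2; lia.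
- by rewrite IHF; lia.
Qed.

Lemma rcons_nth_fverts_from F k i : i < size (sizes F) -> 1 < nth 0 (sizes F) i ->
  rcons (nth [::] (fverts_from k F) i) 0 = nth [::] (fverts_from k F) i.+1.
Proof.
elim/pforest_ind: F k i => // cs F IHcs IHF k i.
rewrite !nth_fverts_from_cons nth_sizes_cons sizes_cons /= size_cat => ltiF.
have [->|i_neq0] := eqVneq i 0; rewrite ?eqxx ?(negbTE i_neq0) /=.
  by case: cs {IHcs ltiF} => [|[]].
case: ifP => lei_cs gt1_i.
  have := @nth_sizes_bound cs i.-1 ltac:(lia) => end_i.
  have -> : i < size (sizes cs) by lia.
  by rewrite rcons_cons IHcs ?prednK //; lia.
have -> : (i < size (sizes cs)) = false by lia.
by rewrite IHF ?subSn //; lia.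
Qed.

Lemma sizes_laminar F i j : i < size (sizes F) -> j < size (sizes F) ->
  i < j < i + nth 0 (sizes F) i -> j + nth 0 (sizes F) j <= i + nth 0 (sizes F) i.
Proof.
move=> ltiF ltjF /andP[ltij ltj_end].
have := nth_sizes_bound ltjF; have := nth_sizes_gt0 ltjF => gt0_j j_end.
have hle_ij : hle (nth [::] (fverts_from 0 F) i) (nth [::] (fverts_from 0 F) j).
  by rewrite hle_nth // ltnW.
set l := (j + nth 0 (sizes F) j).-1.
have hle_jl : hle (nth [::] (fverts_from 0 F) j) (nth [::] (fverts_from 0 F) l).
  by rewrite hle_nth /l //; lia.
have := prefix_trans hle_ij hle_jl; rewrite -/(hle _ _) hle_nth /l //; lia.
Qed.

Lemma mem_nth_fverts F i : i < size (sizes F) -> nth [::] (fverts F) i \in fverts F.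
Proof. by move=> ltiF; rewrite mem_nth // size_fverts_from. Qed.

Lemma rank_nth F i : i < size (sizes F) -> rank F (nth [::] (fverts F) i) = i.
Proof. exact: count_tlt_nth. Qed.

Definition sizes_dominate (F G : pforest) : Prop :=
  size (sizes F) = size (sizes G) /\ forall i, nth 0 (sizes G) i <= nth 0 (sizes F) i.

Lemma forest_leP F G : size (sizes F) = size (sizes G) ->
  forest_le F G <-> sizes_dominate F G.
Proof.
move=> eq_size; split=> [le_FG|[_ dom_FG] x y x' y']; last first.
  case/(nthP [::]) => i ltiF <-; case/(nthP [::]) => j ltjF <-.
  case/(nthP [::]) => i' ltiG <-; case/(nthP [::]) => j' ltjG <-.
  rewrite !size_fverts_from in ltiF ltjF ltiG ltjG.
  rewrite !rank_nth // => -> ->; rewrite !hle_nth -?eq_size //.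
  by have := dom_FG i; lia.
split=> // i; have [ltiF|leFi] := ltnP i (size (sizes F)); last first.
  by rewrite !nth_default -?eq_size.
have ltiG : i < size (sizes G) by rewrite -eq_size.
have := nth_sizes_bound ltiG; have := nth_sizes_gt0 ltiG => gt0_i end_i.
set j := (i + nth 0 (sizes G) i).-1.
have ltjG : j < size (sizes G) by rewrite /j; lia.
have ltjF : j < size (sizes F) by rewrite eq_size.
have := le_FG _ _ _ _ (mem_nth_fverts ltiF) (mem_nth_fverts ltjF)
  (mem_nth_fverts ltiG) (mem_nth_fverts ltjG).
rewrite !rank_nth // => /(_ erefl erefl).
by rewrite !hle_nth // /j; lia.
Qed.

Lemma transf_cat_root A cs c B :
  transf (A ++ PNode (rcons cs c) :: B) [:: size A] = A ++ PNode cs :: c :: B.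
Proof.
rewrite /= take_size_cat // -[size A]addn0 nth_cat_addn -cat_rcons.
by rewrite drop_size_cat ?size_rcons ?addn0 // /split_last /= rev_rcons revK.
Qed.

Lemma transf_cat_cons A cs B j s :
  transf (A ++ PNode cs :: B) [:: size A, j & s] = A ++ PNode (transf cs (j :: s)) :: B.
Proof.
rewrite /= take_size_cat // -[size A]addn0 nth_cat_addn; congr (_ ++ _ :: _).
by rewrite addn0 -cat_rcons drop_size_cat ?size_rcons.
Qed.

Lemma mem_fverts_cat_cons A cs B s :
  (size A :: s \in fverts (A ++ PNode cs :: B)) = (s \in tverts (PNode cs)).
Proof.
rewrite /fverts fverts_from_cat add0n fverts_from_cons tverts_PNode.
rewrite !(mem_cat, in_cons) eqseq_cons eqxx mem_map; last by move=> x y [].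
have /negbTE-> : size A :: s \notin fverts_from 0 A.
  by apply/negP => /mem_fverts_from [h [x' [[-> _]]]]; rewrite ltnn.
have /negbTE-> : size A :: s \notin fverts_from (size A).+1 B.
  by apply/negP => /mem_fverts_from [h [x' [[-> _]]]]; rewrite ltnn.
by rewrite /= orbF.
Qed.

(* The last child of the [v]-th vertex [s] has index
   [v + nth 0 (sizes F) v - m], where [m] is the size of its subtree. *)
Definition transf_shrinks F s v m := [/\ v < size (sizes F),
  nth [::] (fverts F) v = s, 0 < m < nth 0 (sizes F) v,
  nth 0 (sizes F) (v + nth 0 (sizes F) v - m) = m &
  sizes (transf F s) = set_nth 0 (sizes F) v (nth 0 (sizes F) v - m)].

Lemma transf_shrinks_root A cs c B :
  transf_shrinks (A ++ PNode (rcons cs c) :: B) [:: size A]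
    (size (sizes A)) (size (tsizes c)).
Proof.
have sizes_rcons : sizes (rcons cs c) = sizes cs ++ tsizes c.
  by rewrite -cats1 sizes_cat /sizes /= cats0.
have gt0_c : 0 < size (tsizes c) by case: c {sizes_rcons}.
have head_c : nth 0 (tsizes c ++ sizes B) 0 = size (tsizes c) by case: c {sizes_rcons gt0_c}.
rewrite /transf_shrinks transf_cat_root sizes_cat sizes_cons -[size (sizes A)]addn0.
rewrite !nth_cat_addn /=.
rewrite sizes_rcons !size_cat; split.
- by rewrite /=; lia.
- by rewrite /fverts fverts_from_cat -(size_fverts_from 0) nth_cat_addn.
- by apply/andP; split; lia.
- have -> : size (sizes A) + 0 + (size (sizes cs) + size (tsizes c)).+1 - size (tsizes c)
            = size (sizes A) + (size (sizes cs)).+1 by lia.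
  by rewrite nth_cat_addn /= -catA -[size (sizes cs)]addn0 nth_cat_addn.
- rewrite set_nth_cat_addn !sizes_cat !sizes_cons -catA /=.
  by congr (_ ++ _ :: _); lia.
Qed.

Lemma transf_shrinks_cons A cs B j s v m : transf_shrinks cs (j :: s) v m ->
  transf_shrinks (A ++ PNode cs :: B) [:: size A, j & s] (size (sizes A) + v.+1) m.
Proof.
case=> ltv nth_v /andP[gt0_m lt_mv] nth_c sizes_cs.
have := nth_sizes_bound ltv => end_v.
have nth_in l : l < size (sizes cs) ->
    nth 0 (sizes (A ++ PNode cs :: B)) (size (sizes A) + l.+1) = nth 0 (sizes cs) l.
  by move=> ltl; rewrite sizes_cat sizes_cons nth_cat_addn /= nth_cat ltl.
rewrite /transf_shrinks transf_cat_cons !nth_in //; split.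
- by rewrite sizes_cat sizes_cons size_cat /= size_cat; lia.
- rewrite /fverts fverts_from_cat -(size_fverts_from 0) nth_cat_addn /=.
  by rewrite nth_cat size_map size_fverts_from ltv (nth_map [::]) ?size_fverts_from // nth_v.
- by rewrite gt0_m.
- have -> : size (sizes A) + v.+1 + nth 0 (sizes cs) v - m
            = size (sizes A) + (v + nth 0 (sizes cs) v - m).+1 by lia.
  by rewrite nth_in //; lia.
- rewrite !sizes_cat !sizes_cons set_nth_cat_addn /= set_nth_catl // sizes_cs size_set_nth.
  by congr (_ ++ _.+1 :: _); lia.
Qed.

Lemma transf_shrinksP F s : s \in fverts F -> rcons s 0 \in fverts F ->
  exists v m, transf_shrinks F s v m.
Proof.
elim: s F => [|i s IH] F mem_s mem_rs; first by have := fverts_from_neq_nil mem_s.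
have lt_iF : i < size F.
  by case/mem_fverts_from: mem_s => h [x' [[-> _] /andP[_]]].
move: mem_s mem_rs; rewrite -(cat_take_drop i F) (drop_nth (PNode [::])) //.
have := size_takel (ltnW lt_iF).
move: (take i F) (drop i.+1 F) (nth (PNode [::]) F i) => A B [cs] <-.
rewrite rcons_cons !mem_fverts_cat_cons tverts_PNode !inE.
case: s IH => [|j s] IH.
  case/lastP: cs => [|cs c] // _ _.
  by exists (size (sizes A)), (size (tsizes c)); apply: transf_shrinks_root.
move=> /= mem_s mem_rs; have [v [m shrinks]] := IH cs mem_s mem_rs.
by exists (size (sizes A) + v.+1), m; apply: transf_shrinks_cons.
Qed.

Lemma transf_step_dominate F G : transf_step F G -> sizes_dominate F G.
Proof.
case=> s [mem_s [mem_rs ->]].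
have [v [m [ltv _ _ _ sizes_transf]]] := transf_shrinksP mem_s mem_rs.
rewrite /sizes_dominate sizes_transf; split; first by rewrite size_set_nth; apply/esym/maxn_idPr.
by move=> i; rewrite nth_set_nth /=; case: ifP => // /eqP->; rewrite leq_subr.
Qed.

Lemma clos_rt_dominate F G :
  clos_refl_trans pforest transf_step F G -> sizes_dominate F G.
Proof.
elim=> [{}F {}G /transf_step_dominate //|{}F|F1 F2 F3 _ [eq12 dom12] _ [eq23 dom23]].
  by split.
by split=> [|i]; [rewrite eq12 | apply: leq_trans (dom23 i) (dom12 i)].
Qed.

(* Transform [F] at the last vertex [v] where the sizes of [G] are strictly
   smaller.  The last child [c] of [v] lies after [v], so [G] and [F] agree at
   [c]; as the subtree intervals of [G] are laminar, the subtree of [c] in [G]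
   does not fit into that of [v], which therefore ends before [c]. *)
Lemma dominate_transf_step F G : sizes_dominate F G -> sizes F != sizes G ->
  exists2 F', transf_step F F' &
    sizes_dominate F' G /\ sumn (sizes F') < sumn (sizes F).
Proof.
move=> [eq_size dom_FG] neq_FG; set n := size (sizes F).
pose P i := (i < n) && (nth 0 (sizes G) i < nth 0 (sizes F) i).
have exP : exists i, P i by apply: exists_nth_ltn.
have ubP i : P i -> i <= n by case/andP=> /ltnW.
have [v /andP[ltv lt_GFv] maxv] := ex_maxnP exP ubP.
have ltvG : v < size (sizes G) by rewrite -eq_size.
have := nth_sizes_gt0 ltvG; have := nth_sizes_bound ltv => end_v gt0_Gv.
set s := nth [::] (fverts F) v.
have mem_s : s \in fverts F by apply: mem_nth_fverts.
have mem_rs : rcons s 0 \in fverts F.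
  by rewrite /s /fverts rcons_nth_fverts_from ?mem_nth_fverts //; lia.
have [v' [m [ltv' nth_v' /andP[gt0_m lt_mv] nth_c sizes_transf]]] := transf_shrinksP mem_s mem_rs.
have eq_v' : v' = v by rewrite -(rank_nth ltv') nth_v' rank_nth.
subst v'; set c := v + nth 0 (sizes F) v - m in nth_c.
have le_m_Gc : m <= nth 0 (sizes G) c.
  have : ~~ P c by apply/negP => /maxv; rewrite /c; lia.
  by rewrite /P negb_and -!leqNgt nth_c => /orP[]; rewrite /c; lia.
have le_Gv : nth 0 (sizes G) v <= nth 0 (sizes F) v - m.
  have [lt_c_endG|] := ltnP c (v + nth 0 (sizes G) v); last by rewrite /c; lia.
  have := @sizes_laminar G v c ltvG; rewrite /c in lt_c_endG le_m_Gc *; lia.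
exists (transf F s); first by exists s.
rewrite /sizes_dominate sizes_transf size_set_nth (maxn_idPr ltv); split.
  by split=> // i; rewrite nth_set_nth /=; case: ifP => [/eqP->|].
by have := sumn_set_nth_add (nth 0 (sizes F) v - m) ltv; lia.
Qed.

Lemma dominate_clos_rt F G :
  sizes_dominate F G -> clos_refl_trans pforest transf_step F G.
Proof.
elim: {F}(sumn (sizes F)).+1 {-2}F (ltnSn (sumn (sizes F))) => // N IH F lt_FN dom_FG.
have [/sizes_inj->|neq_FG] := eqVneq (sizes F) (sizes G); first exact: rt_refl.
have [F' step_FF' [dom_F'G lt_F'F]] := dominate_transf_step dom_FG neq_FG.
apply: (rt_trans _ _ _ F' _ (rt_step _ _ _ _ step_FF')).
by apply: IH dom_F'G; lia.
Qed.

Theorem proposition20 (n : nat) (F G : pforest) :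
  nverts F = n -> nverts G = n ->
  (forest_le F G <-> clos_refl_trans pforest transf_step F G).
Proof.
rewrite /nverts /fverts !size_fverts_from => <- eq_size.
rewrite forest_leP //; split; [exact: dominate_clos_rt | exact: clos_rt_dominate].
Qed.
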